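(* Let $S$ be a star-shaped subset of a topological real vector space $V$ and $p_S$ its gauge function. Then: (1a) $\mathrm{int}\big(p_S^{-1}([0,1))\big)=\mathrm{int}(S)=\mathrm{int}\big(p_S^{-1}([0,1])\big)$; (1b) $\overline{p_S^{-1}([0,1))}=\overline{S}=\overline{p_S^{-1}([0,1])}$; (2a) $p_S$ is lower semi-continuous $\iff$ $p_S^{-1}([0,1])$ is closed in $V$ $\iff$ $p_S^{-1}([0,1])=\overline{S}$; (2b) $p_S$ is upper semi-continuous $\iff$ $p_S^{-1}([0,1))$ is open in $V$ $\iff$ $p_S^{-1}([0,1))=\mathrm{int}(S)$; (2c) $p_S$ is continuous $\iff$ $p_S^{-1}(1)=\partial S$. Here interior, closure and boundary are taken in $V$, and semi-continuity/continuity refer to $p_S$ as a map into $[0,+\infty]$ with its usual order topology.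
   Context: Topological real vector spaces are not assumed Hausdorff. A subset $S$ is star-shaped (about the origin) if $tx\in S$ for all $x\in S$, $t\in[0,1]$. The gauge of $S$ is $p_S:V\to[0,+\infty]$, $p_S(x)=\inf\{\lambda\ge 0: x\in\lambda S\}$ (with $\inf\emptyset=+\infty$). *)

From HB Require Import structures.
From mathcomp Require Import all_boot all_order all_algebra.
From mathcomp Require Import all_classical all_reals all_analysis.
Set Implicit Arguments. Unset Strict Implicit. Unset Printing Implicit Defensive.
Import Order.TTheory GRing.Theory Num.Theory.
Local Open Scope classical_set_scope.
Local Open Scope ring_scope.

Section Gauge.
Context {R : realType} {V : topologicalLmodType R}.

Definition star_shaped (S : set V) : Prop :=
  forall x (t : R), S x -> 0 <= t <= 1 -> S (t *: x).

Definition scale_set (l : R) (S : set V) : set V := (fun y => l *: y) @` S.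

(** Gauge (Minkowski functional) p_S : V -> [0, +oo], inf of empty = +oo. *)
Definition gauge (S : set V) (x : V) : \bar R :=
  ereal_inf [set l%:E | l in [set l : R | 0 <= l /\ scale_set l S x]].

Definition boundary (A : set V) : set V := closure A `\` interior A.

(** Upper semicontinuity of an extended-real-valued map (dual of the
    library's [lower_semicontinuous]). *)
Definition upper_semicontinuous (f : V -> \bar R) : Prop :=
  forall x (a : R), (f x < a%:E)%E ->
    exists2 U, nbhs x U & forall y, U y -> (f y < a%:E)%E.

End Gauge.

From HB Require Import structures.
From mathcomp Require Import all_boot all_order all_algebra.
From mathcomp Require Import all_classical all_reals all_analysis.
Import Order.TTheory GRing.Theory Num.Theory.
Local Open Scope classical_set_scope.
Local Open Scope ring_scope.

(* The gauge p is positively homogeneous, p (c x) = c p x for c > 0, so each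
   sublevel set {p <= c} (resp. {p < c}) is the image of P1 = {p <= 1}
   (resp. P0 = {p < 1}) under the homeomorphism x |-> c x: lower (upper)
   semicontinuity of p thus amounts to P1 being closed (P0 being open).
   Star-shapedness gives P0 <= S <= P1.  As t x -> x when t -> 1, every x in
   P1 is a limit of points t x of P0 (t < 1), and an interior point x of P1
   has t x in P1 for some t > 1, whence p x < 1; this squeezes the interiors
   and the closures of P0, S and P1 together.  Finally p^-1(1) = P1 \ P0 and
   the boundary of S is cl S \ int S, so they agree iff P0 = int S and
   P1 = cl S. *)

Section interior_closure.
Context {T : topologicalType}.
Implicit Types A B S : set T.

Lemma interior_sandwich {A S B} : A `<=` S -> S `<=` B -> interior B `<=` A ->
  interior A = interior S /\ interior S = interior B.
Proof.
move=> /interiorS AS /interiorS SB BA; have BA' : interior B `<=` interior A.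
  by rewrite -[X in X `<=` _](interior_id _).1; [exact: interiorS | exact: open_interior].
by split; apply/seteqP; split=> //; [exact: subset_trans SB BA' | exact: subset_trans BA' AS].
Qed.

Lemma closure_sandwich {A S B} : A `<=` S -> S `<=` B -> B `<=` closure A ->
  closure A = closure S /\ closure S = closure B.
Proof.
move=> /closureS AS /closureS SB BA; have BA' : closure B `<=` closure A.
  by rewrite [X in _ `<=` X](closure_id _).1; [exact: closureS | exact: closed_closure].
by split; apply/seteqP; split=> //; [exact: subset_trans SB BA' | exact: subset_trans BA' AS].
Qed.

Lemma closed_closure_eqP {A S} : closure A = closure S -> closed A <-> A = closure S.
Proof. by move=> <-; split=> [/closure_id|->]//; exact: closed_closure. Qed.

Lemma open_interior_eqP {A S} : interior A = interior S -> open A <-> A = interior S.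
Proof. by move=> <-; split=> [/interior_id ->|->]//; exact: open_interior. Qed.

End interior_closure.

Lemma setD_nested_eqP {T : Type} (I A B C : set T) :
  I `<=` A -> A `<=` B -> B `<=` C ->
  A = I /\ B = C <-> B `\` A = C `\` I.
Proof.
move=> IA AB BC; split=> [[-> ->]//|BAE]; split; apply/seteqP; split=> // x.
- move=> Ax; apply: contrapT => NIx.
  by have [_] : (B `\` A) x by rewrite BAE; split=> //; exact/BC/AB.
- move=> Cx; have [/IA/AB//|NIx] := pselect (I x).
  by have [] : (B `\` A) x by rewrite BAE.
Qed.

Section scale_continuous.
Context {R : realType} {V : topologicalLmodType R}.

Lemma continuous_scaler (c : R) : continuous (fun y : V => c *: y).
Proof.
move=> y; apply: (@continuous_comp _ _ _ (fun y : V => (c : R^o, y))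
  (fun z : R^o * V => z.1 *: z.2)); last exact: scale_continuous.
by apply: (@cvg_pair _ _ _ _ (nbhs (c : R^o))); [exact: cvg_cst | exact: cvg_id].
Qed.

Lemma continuous_scalel (x : V) : continuous (fun t : R^o => t *: x).
Proof.
move=> t; apply: (@continuous_comp _ _ _ (fun t : R^o => (t, x))
  (fun z : R^o * V => z.1 *: z.2)); last exact: scale_continuous.
by apply: (@cvg_pair _ _ _ _ (nbhs t)); [exact: cvg_id | exact: cvg_cst].
Qed.

End scale_continuous.

Section semicontinuity.
Context {R : realType} {V : topologicalLmodType R} (f : V -> \bar R).
Local Open Scope ereal_scope.

Lemma lower_semicontinuous_closedP :
  lower_semicontinuous f <-> forall a, closed [set x | f x <= a%:E].
Proof.
have CE a : ~` [set x | f x <= a%:E] = [set x | a%:E < f x].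
  by apply/seteqP; split=> x /=; rewrite ltNge => /negP.
by rewrite lower_semicontinuousP; split=> H a; [rewrite -openC CE | rewrite -CE openC].
Qed.

Lemma upper_semicontinuousP :
  upper_semicontinuous f <-> forall a, open [set x | f x < a%:E].
Proof.
split=> [usc a|openf x a fxa].
  by rewrite openE => x /usc[U xU Uf]; apply: filterS xU.
by exists [set x | f x < a%:E] => //; exact: open_nbhs_nbhs.
Qed.

Lemma continuous_semicontinuousP :
  continuous f <-> lower_semicontinuous f /\ upper_semicontinuous f.
Proof.
split=> [fC|[lsc usc] x B].
  split=> x a; [set U := [set y | a%:E < y] | set U := [set y | y < a%:E]];
    exists (f @^-1` U) => //; apply/fC/open_nbhs_nbhs; split=> //;
    [exact: open_ereal_gt_ereal | exact: open_ereal_lt_ereal].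
case Efx: (f x) => [r||].
- move=> /nbhs_EFin /nbhs_ballP [e e0 reB].
  have [U1 xU1 U1f] := lsc x (r - e)%R ltac:(by rewrite Efx lte_fin gtrBl).
  have [U2 xU2 U2f] := usc x (r + e)%R ltac:(by rewrite Efx lte_fin ltrDl).
  apply: filterS (filterI xU1 xU2) => y [/U1f + /U2f] /=.
  case: (f y) => [s||] //; rewrite !lte_fin => res ser; apply: reB.
  by rewrite /ball /= ltr_distlC res ser.
- by move=> [M [_ MB]]; have [U xU Uf] := lsc x M ltac:(by rewrite Efx ltry);
    apply: filterS xU => y /Uf /MB.
- by move=> [M [_ MB]]; have [U xU Uf] := usc x M ltac:(by rewrite Efx ltNyr);
    apply: filterS xU => y /Uf /MB.
Qed.

End semicontinuity.

Section gauge.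
Context {R : realType} {V : topologicalLmodType R} (S : set V).
Local Notation p := (gauge S).
Local Open Scope ereal_scope.

Lemma gauge_ge0 x : 0 <= p x.
Proof. by apply: le_ereal_inf_tmp => _ [l [l0 _] <-]; rewrite lee_fin. Qed.

Lemma gauge_le1 x : S x -> p x <= 1%:E.
Proof.
by move=> Sx; apply: ereal_inf_lbound; exists 1%R; split=> //; exists x; rewrite ?scale1r.
Qed.

Lemma gaugeZ (c : R) x : (0 < c)%R -> p (c *: x) = c%:E * p x.
Proof.
move=> c0; rewrite /gauge -ereal_inf_pZl // image_comp; congr ereal_inf.
apply/seteqP; split=> _ [l [l0 [s Ss sl]] <-] /=.
- exists (c^-1 * l)%R; last by rewrite /= -EFinM mulrA mulfV ?gt_eqF ?mul1r.
  split; first by rewrite mulr_ge0 // invr_ge0 ltW.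
  by exists s => //; rewrite -scalerA sl scalerA mulVf ?gt_eqF ?scale1r.
- exists (c * l)%R => //; split; first by rewrite mulr_ge0 // ltW.
  by exists s => //; rewrite -scalerA sl.
Qed.

Lemma gauge_le_scaleE (c : R) : (0 < c)%R ->
  [set y | p y <= c%:E] = (fun y => c^-1 *: y) @^-1` [set y | p y <= 1%:E].
Proof.
by move=> c0; apply/seteqP; split=> y /=;
  rewrite gaugeZ ?invr_gt0 // lee_pdivrMl // mule1.
Qed.

Lemma gauge_lt_scaleE (c : R) : (0 < c)%R ->
  [set y | p y < c%:E] = (fun y => c^-1 *: y) @^-1` [set y | p y < 1%:E].
Proof.
by move=> c0; apply/seteqP; split=> y /=;
  rewrite gaugeZ ?invr_gt0 // lte_pdivrMl // mule1.
Qed.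

Lemma interior_gauge_le1 :
  interior [set y | p y <= 1%:E] `<=` [set y | p y < 1%:E].
Proof.
move=> x xP; have := continuous_scalel x 1%R.
rewrite /continuous_at scale1r => /(_ _ xP) near1.
have [t [t1 pt]] : exists t : R, (1 < t)%R /\ p (t *: x) <= 1%:E.
  apply: (filter_ex (F := (1 : R)^'+)); near=> t; split.
  - by near: t; exact: nbhs_right_gt.
  - by near: t; apply: cvg_within.
have t0 : (0 < t)%R by exact: lt_trans t1.
move: pt; rewrite gaugeZ // -lee_pdivlMl // mule1 => /le_lt_trans; apply.
by rewrite lte_fin invf_lt1.
Unshelve. all: by end_near.
Qed.

Lemma gauge_le1_closure :
  [set y | p y <= 1%:E] `<=` closure [set y | p y < 1%:E].
Proof.
move=> x px B xB; have := continuous_scalel x 1%R.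
rewrite /continuous_at scale1r => /(_ _ xB) near1.
have [t [t0 t1 Bt]] : exists t : R, [/\ (0 < t)%R, (t < 1)%R & B (t *: x)].
  apply: (filter_ex (F := (1 : R)^'-)); near=> t; split.
  - by near: t; exact: nbhs_left_gt.
  - by near: t; exact: nbhs_left_lt.
  - by near: t; apply: cvg_within.
exists (t *: x); split=> //=; rewrite gaugeZ //.
by rewrite -lte_pdivlMl // mule1 (le_lt_trans px) // lte_fin invf_gt1.
Unshelve. all: by end_near.
Qed.

Lemma lower_semicontinuous_gaugeP :
  lower_semicontinuous p <-> closed [set y | p y <= 1%:E].
Proof.
rewrite lower_semicontinuous_closedP; split=> [/(_ 1%R)//|P1cl a].
have [a0|a0] := ltP a 0%R.
  rewrite (_ : [set y | p y <= a%:E] = set0); first exact: closed0.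
  apply/seteqP; split=> y //=.
  by rewrite leNgt (lt_le_trans _ (gauge_ge0 y)) // lte_fin.
have -> : [set y | p y <= a%:E] =
    \bigcap_(e in [set e | 0 < e]%R) [set y | p y <= (a + e)%:E].
  apply/seteqP; split=> y /=.
  - move=> pya e e0; rewrite EFinD; apply: le_trans pya _.
    by rewrite leeDl // lee_fin ltW.
  - by move=> pyae; apply/lee_addgt0Pr => e e0; rewrite -EFinD; exact: pyae.
apply: closed_bigI => e e0; rewrite gauge_le_scaleE ?ltr_wpDl //.
by apply: preimage_closed => // y _; exact: continuous_scaler.
Qed.

Lemma upper_semicontinuous_gaugeP :
  upper_semicontinuous p <-> open [set y | p y < 1%:E].
Proof.
rewrite upper_semicontinuousP; split=> [/(_ 1%R)//|P0op a].
have [a0|a0] := leP a 0%R.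
  rewrite (_ : [set y | p y < a%:E] = set0); first exact: open0.
  apply/seteqP; split=> y //=.
  by rewrite ltNge (le_trans _ (gauge_ge0 y)) // lee_fin.
rewrite gauge_lt_scaleE //.
by apply: open_comp => // y _; exact: continuous_scaler.
Qed.

Lemma gauge_lt1_subset : star_shaped S -> [set y | p y < 1%:E] `<=` S.
Proof.
move=> star x /ereal_inf_lt[_ [l [l0 [s Ss <-]]] <-]; rewrite lte_fin => l1.
by apply: star => //; rewrite l0 ltW.
Qed.

End gauge.

Theorem mainTheorem14 (R : realType) (V : topologicalLmodType R) (S : set V) :
  star_shaped S ->
  let P0 := gauge S @^-1` (`[(0%:E)%E, (1%:E)%E[) in
  let P1 := gauge S @^-1` (`[(0%:E)%E, (1%:E)%E]) in
  (* (1a) *)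
  (interior P0 = interior S /\ interior S = interior P1) /\
  (* (1b) *)
  (closure P0 = closure S /\ closure S = closure P1) /\
  (* (2a) *)
  ((lower_semicontinuous (gauge S) <-> closed P1) /\
   (closed P1 <-> P1 = closure S)) /\
  (* (2b) *)
  ((upper_semicontinuous (gauge S) <-> open P0) /\
   (open P0 <-> P0 = interior S)) /\
  (* (2c) *)
  (continuous (gauge S) <-> gauge S @^-1` [set y | y = (1%:E)%E] = boundary S).
Proof.
move=> star P0 P1.
have -> : P0 = [set y | (gauge S y < 1%:E)%E].
  by apply/seteqP; split=> y; rewrite /P0 /= in_itv /= gauge_ge0.
have -> : P1 = [set y | (gauge S y <= 1%:E)%E].
  by apply/seteqP; split=> y; rewrite /P1 /= in_itv /= gauge_ge0.
have P0S := gauge_lt1_subset S star; have SP1 := gauge_le1 S.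
have [I0 I1] := interior_sandwich P0S SP1 (interior_gauge_le1 S).
have [C0 C1] := closure_sandwich P0S SP1 (gauge_le1_closure S).
have P1closedE := closed_closure_eqP (esym C1).
have P0openE := open_interior_eqP I0.
have lscE := lower_semicontinuous_gaugeP S.
have uscE := upper_semicontinuous_gaugeP S.
do 4!(split; first by split).
have -> : gauge S @^-1` [set y | y = 1%:E] =
    [set y | (gauge S y <= 1%:E)%E] `\` [set y | (gauge S y < 1%:E)%E].
  apply/seteqP; split=> y /=; first by move=> ->; rewrite lexx ltxx.
  by move=> [le1 /negP]; rewrite -leNgt => ge1; apply/eqP; rewrite eq_le le1.
rewrite continuous_semicontinuousP lscE uscE P1closedE P0openE and_comm.
rewrite /boundary; apply: setD_nested_eqP.
- by rewrite -I0; exact: interior_subset.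
- by move=> y /ltW.
- by rewrite -C0; exact: gauge_le1_closure.
Qed.
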